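(* There is an absolute constant $C>0$ such that the following holds. Let $\delta > 0$ and let $n$ be an integer with $n \geq \delta^{-2}$. Let $F$ be a $2$-edge-coloured graph on vertex set $[n]$ which contains no alternating cycle, and suppose that $$\sum_{i=1}^{n} |d^R(i) - d^B(i)| \leq \delta n^2.$$ Then $|E(F)| \leq C\delta^{1/2} n^2$.
   Context: A $2$-edge-coloured graph is a finite simple graph each of whose edges is coloured red or blue. For a vertex $i$, $d^R(i)$ (resp. $d^B(i)$) is the number of red (resp. blue) edges incident to $i$. An alternating cycle is a cycle whose consecutive edges have alternating colours. *)

From HB Require Import structures.
From mathcomp Require Import all_boot all_order all_algebra.
From mathcomp Require Import reals.
Set Implicit Arguments. Unset Strict Implicit. Unset Printing Implicit Defensive.
Import Order.TTheory GRing.Theory Num.Theory.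

Definition two_coloured_graph (n : nat) (red blue : rel 'I_n) : Prop :=
  [/\ symmetric red, symmetric blue, irreflexive red, irreflexive blue
    & forall x y, ~~ (red x y && blue x y)].

Definition edgeF (n : nat) (red blue : rel 'I_n) : rel 'I_n :=
  fun x y => red x y || blue x y.

Definition degR (n : nat) (red : rel 'I_n) (i : 'I_n) : nat := #|[set j | red i j]|.
Definition degB (n : nat) (blue : rel 'I_n) (i : 'I_n) : nat := #|[set j | blue i j]|.

Definition num_edges (n : nat) (red blue : rel 'I_n) : nat :=
  #|[set p : 'I_n * 'I_n | (p.1 < p.2)%N && edgeF red blue p.1 p.2]|.

Definition alternating_cycle (n : nat) (red blue : rel 'I_n) (s : seq 'I_n) : Prop :=
  let k := size s in
  [/\ (3 <= k)%N, uniq s &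
   forall (x0 : 'I_n) (i : nat), (i < k)%N ->
     let a := nth x0 s i in
     let b := nth x0 s ((i + 1) %% k) in
     let c := nth x0 s ((i + 2) %% k) in
     edgeF red blue a b /\ red a b <> red b c].

Definition has_alternating_cycle (n : nat) (red blue : rel 'I_n) : Prop :=
  exists s : seq 'I_n, alternating_cycle red blue s.

From HB Require Import structures.
From mathcomp Require Import all_boot all_order all_algebra.
From mathcomp Require Import reals.
From mathcomp Require Import lra ring zify.
Import Order.TTheory GRing.Theory Num.Theory.
Set Implicit Arguments. Unset Strict Implicit. Unset Printing Implicit Defensive.

(* Every vertex set X defines the cut digraph of X: red edges crossing the cut
   point out of X, blue ones into X.  Its directed cycles are alternating
   cycles, so it is acyclic. *)

Section SumSquares.
Variable R : realFieldType.
Local Open Scope ring_scope.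

Lemma card_set_natr (T : finType) (P : pred T) :
  #|[set x | P x]|%:R = \sum_x (P x)%:R :> R.
Proof.
rewrite -sum1_card natr_sum big_mkcond /=; apply: eq_bigr => x _.
by rewrite inE; case: (P x).
Qed.

(* Cauchy-Schwarz against the all-ones vector: (sum a)^2 <= |T| * sum a^2.
   It follows from expanding the nonnegative double sum of (a i - a j)^2. *)
Lemma sqr_sum_le (T : finType) (a : T -> R) :
  (\sum_i a i) ^+ 2 <= #|T|%:R * \sum_i a i ^+ 2.
Proof.
have sqr_sum : (\sum_i a i) ^+ 2 = \sum_i \sum_j a i * a j.
  by rewrite expr2 mulr_suml; apply: eq_bigr => i _; rewrite mulr_sumr.
have expand : \sum_i \sum_j (a i - a j) ^+ 2 =
    \sum_i \sum_(j : T) a i ^+ 2 + \sum_(i : T) \sum_j a j ^+ 2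
    - 2 * \sum_i \sum_j a i * a j.
  rewrite mulr_sumr -big_split /= -sumrB; apply: eq_bigr => i _.
  by rewrite mulr_sumr -big_split /= -sumrB; apply: eq_bigr => j _; ring.
have sum_const : \sum_i \sum_(j : T) a i ^+ 2 = #|T|%:R * \sum_i a i ^+ 2.
  by rewrite mulr_sumr; apply: eq_bigr => i _; rewrite sumr_const mulr_natl.
have : 0 <= \sum_i \sum_j (a i - a j) ^+ 2.
  by apply: sumr_ge0 => i _; apply: sumr_ge0 => j _; apply: sqr_ge0.
rewrite expand sum_const sumr_const -mulr_natl -sqr_sum; lra.
Qed.

End SumSquares.

(* Averaged over all X, distinct coordinates are
   orthogonal, which is what makes random cuts behave like random signs. *)
Section RademacherSigns.
Variables (R : realFieldType) (T : finType).
Local Open Scope ring_scope.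

Definition sgn (X : {set T}) (x : T) : R := if x \in X then 1 else -1.

Definition nsubsets : R := #|{set T}|%:R.

Lemma sgn_sqr X x : sgn X x * sgn X x = 1.
Proof. by rewrite /sgn; case: (x \in X); lra. Qed.

Definition toggle (x : T) (X : {set T}) : {set T} := [set y | (y \in X) (+) (y == x)].

Lemma toggleK x : involutive (toggle x).
Proof. by move=> X; apply/setP => y; rewrite !inE addbK. Qed.

Lemma sgn_toggle x X y :
  sgn (toggle x X) y = if y == x then - sgn X y else sgn X y.
Proof.
rewrite /sgn inE; case: (y == x); rewrite ?addbT ?addbF //.
by case: (y \in X); rewrite /= ?opprK.
Qed.

(* Orthogonality: two distinct sign coordinates are uncorrelated, since
   toggling x is a bijection that negates their product. *)
Lemma sum_sgn_mul x y :
  \sum_X sgn X x * sgn X y = if x == y then nsubsets else 0.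
Proof.
case: (eqVneq x y) => [<-|x_ne_y].
  by rewrite (eq_bigr (fun=> 1)) => [|X _]; rewrite ?sgn_sqr // sumr_const.
have flip : \sum_X sgn X x * sgn X y = \sum_X - (sgn X x * sgn X y).
  rewrite (reindex_inj (can_inj (toggleK x))); apply: eq_bigr => X _.
  by rewrite !sgn_toggle eqxx eq_sym (negbTE x_ne_y) mulNr.
by rewrite sumrN in flip; lra.
Qed.

Lemma sum_sgn_sqr (c : T -> R) :
  \sum_X (\sum_w sgn X w * c w) ^+ 2 = nsubsets * \sum_w c w ^+ 2.
Proof.
have expand X : (\sum_w sgn X w * c w) ^+ 2 =
    \sum_w \sum_w' (c w * c w') * (sgn X w * sgn X w').
  rewrite expr2 mulr_suml; apply: eq_bigr => w _.
  by rewrite mulr_sumr; apply: eq_bigr => w' _; ring.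
rewrite (eq_bigr _ (fun X _ => expand X)) exchange_big mulr_sumr.
apply: eq_bigr => w _; rewrite exchange_big /=.
under eq_bigr => w' _ do rewrite -mulr_sumr sum_sgn_mul.
rewrite (bigD1 w) //= eqxx big1 ?addr0 => [|w' /negbTE w'_ne_w].
  by rewrite mulrC expr2.
by rewrite eq_sym w'_ne_w mulr0.
Qed.

Lemma sum_abs_sgn_sqr_le (c : T -> R) :
  (\sum_X `|\sum_w sgn X w * c w|) ^+ 2 <= nsubsets ^+ 2 * \sum_w c w ^+ 2.
Proof.
apply: le_trans (sqr_sum_le _) _.
under eq_bigr => X _ do rewrite real_normK ?num_real //.
by rewrite sum_sgn_sqr mulrA expr2.
Qed.

End RademacherSigns.

Arguments sgn {R T}.
Arguments nsubsets {R} T.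

(* For an acyclic relation e on a finite type, let f(v) be
   the out-degree of v and r(v) the number of vertices reachable from v.  Along
   every arc v -> w, r drops, and it drops by a lot on average:
   f(v)^2 <= 2 * sum_{v -> w} (r v - r w).  Summing over v, the right-hand side
   telescopes to sum_v r(v) (out(v) - in(v)), giving
   (#arcs)^2 <= 2 |T|^2 * sum_v |out(v) - in(v)|. *)
Section AcyclicDigraph.
Variables (T : finType) (e : rel T).
Hypothesis e_acyclic : forall u v, e u v -> ~~ connect e v u.

Definition out_nbrs (v : T) : {set T} := [set w | e v w].
Definition in_nbrs (v : T) : {set T} := [set u | e u v].
Definition reach (v : T) : {set T} := [set w | connect e v w].

Lemma acyclic_irrefl v : ~~ e v v.
Proof. by apply/negP => evv; move: (e_acyclic evv); rewrite connect0. Qed.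

Lemma connect_antisym w w' : connect e w w' -> connect e w' w -> w = w'.
Proof.
case/connectP => p; case: p => [|w1 p] /= path_p -> // back.
case/andP: path_p => e_w_w1 path_p.
have : connect e w1 w by apply: connect_trans back; apply/connectP; exists p.
by rewrite (negbTE (e_acyclic e_w_w1)).
Qed.

(* For an out-neighbour w of v, reach v contains v, reach w, and the
   out-neighbours of v not reachable from w, and these are disjoint. *)
Lemma reach_out_nbr v w : w \in out_nbrs v ->
  (#|reach w| + 1 + #|out_nbrs v :\: reach w| <= #|reach v|)%N.
Proof.
rewrite inE => e_v_w; set Nv := out_nbrs v; set Rw := reach w.
have not_w_to_v : ~~ connect e w v := e_acyclic e_v_w.
set A := v |: (Nv :\: Rw).
have card_A : #|A| = (1 + #|Nv :\: Rw|)%N.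
  by rewrite cardsU1 !inE (negbTE (acyclic_irrefl v)) andbF.
have disj : A :&: Rw = set0.
  apply/setP => x; rewrite !inE; apply/negP => /andP[/orP[/eqP -> | /andP[x_out _]] x_in].
    by rewrite (negbTE not_w_to_v) in x_in.
  by rewrite x_in in x_out.
have sub : A :|: Rw \subset reach v.
  apply/subsetP => x; rewrite !inE => /orP[/orP[/eqP -> | /andP[_ e_v_x]] | w_to_x].
  - exact: connect0.
  - exact: connect1.
  - exact: connect_trans (connect1 e_v_w) w_to_x.
by have := subset_leq_card sub; rewrite cardsU disj cards0 subn0 card_A addnC addnA.
Qed.

(* Among any two distinct out-neighbours, at least one does not reach the
   other; hence these non-reachable pairs number at least (f^2 - f)/2. *)
Lemma unreached_pairs v :
  (#|out_nbrs v| * #|out_nbrs v| <=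
   2 * \sum_(w in out_nbrs v) #|out_nbrs v :\: reach w| + #|out_nbrs v|)%N.
Proof.
set Nv := out_nbrs v.
have pair_bound w w' : (1 <= (w' \notin reach w) + (w \notin reach w') + (w == w'))%N.
  case: (eqVneq w w') => [->|w_ne_w']; first by rewrite addn1.
  rewrite !inE addn0; case c1: (connect e w w'); case c2: (connect e w' w) => //.
  by rewrite (connect_antisym c1 c2) eqxx in w_ne_w'.
have diag : (\sum_(w in Nv) \sum_(w' in Nv) (w == w') = #|Nv|)%N.
  rewrite -sum1_card; apply: eq_bigr => w w_in.
  rewrite (bigD1 w) //= eqxx big1 // => w' /andP[_ /negbTE].
  by rewrite eq_sym => ->.
have unreached w : (\sum_(w' in Nv) (w' \notin reach w) = #|Nv :\: reach w|)%N.
  rewrite -sum1_card big_mkcond [RHS]big_mkcond /=; apply: eq_bigr => x _.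
  by rewrite in_setD andbC; case: (x \in Nv).
have : (#|Nv| * #|Nv| <= \sum_(w in Nv) \sum_(w' in Nv)
          ((w' \notin reach w) + (w \notin reach w') + (w == w')))%N.
  rewrite -sum1_card big_distrl /=; apply: leq_sum => w _.
  by rewrite mul1n; apply: leq_sum => w' _; exact: pair_bound.
under eq_bigr => w _ do rewrite !big_split /=.
rewrite !big_split /= diag [X in (_ + X + _)%N]exchange_big /=.
under eq_bigr => w _ do rewrite unreached.
by rewrite addnn mul2n.
Qed.

Lemma out_degree_reach v :
  (#|out_nbrs v| * #|out_nbrs v|.+1 + 2 * \sum_(w in out_nbrs v) #|reach w|
   <= 2 * #|out_nbrs v| * #|reach v|)%N.
Proof.
have sum_step : (\sum_(w in out_nbrs v) (#|reach w| + 1 + #|out_nbrs v :\: reach w|)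
                 <= #|out_nbrs v| * #|reach v|)%N.
  rewrite -sum1_card big_distrl /=; apply: leq_sum => w w_in.
  by rewrite mul1n; exact: reach_out_nbr.
rewrite !big_split /= sum1_card in sum_step.
have := unreached_pairs v; nia.
Qed.

Variable R : realFieldType.
Local Open Scope ring_scope.

Lemma out_degree_sqr_le v :
  #|out_nbrs v|%:R ^+ 2 <=
  2 * \sum_(w in out_nbrs v) (#|reach v|%:R - #|reach w|%:R) :> R.
Proof.
have := out_degree_reach v; rewrite -(ler_nat R) !natrD !natrM natr_sum.
rewrite sumrB sumr_const -mulr_natl.
have : 0 <= #|out_nbrs v|%:R :> R by rewrite ler0n.
set f := #|out_nbrs v|%:R; set r := #|reach v|%:R.
set s := \sum_(i in out_nbrs v) #|reach i|%:R; nra.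
Qed.

Lemma sum_arcs_potential (phi : T -> R) :
  \sum_v \sum_(w in out_nbrs v) (phi v - phi w) =
  \sum_v phi v * (#|out_nbrs v|%:R - #|in_nbrs v|%:R).
Proof.
have arcs_at v : \sum_(w in out_nbrs v) (phi v - phi w) =
    \sum_w (e v w)%:R * phi v - \sum_w (e v w)%:R * phi w.
  rewrite -sumrB big_mkcond /=; apply: eq_bigr => w _.
  by rewrite inE; case: (e v w); rewrite /= ?mul1r ?mul0r ?subr0.
rewrite (eq_bigr _ (fun v _ => arcs_at v)) sumrB [X in _ - X]exchange_big /=.
rewrite -sumrB; apply: eq_bigr => v _.
by rewrite /out_nbrs /in_nbrs !card_set_natr mulrBr !mulr_sumr; congr (_ - _);
  apply: eq_bigr => w _; rewrite mulrC.
Qed.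

Lemma acyclic_arcs_bound :
  (\sum_v #|out_nbrs v|%:R) ^+ 2 <=
  2 * #|T|%:R ^+ 2 * \sum_v `|#|out_nbrs v|%:R - #|in_nbrs v|%:R| :> R.
Proof.
set N : R := #|T|%:R.
have N_ge0 : 0 <= N by rewrite ler0n.
have sum_sqr : \sum_v #|out_nbrs v|%:R ^+ 2 <=
    2 * \sum_v #|reach v|%:R * (#|out_nbrs v|%:R - #|in_nbrs v|%:R) :> R.
  rewrite -sum_arcs_potential mulr_sumr; apply: ler_sum => v _.
  exact: out_degree_sqr_le.
have potential_le : \sum_v #|reach v|%:R * (#|out_nbrs v|%:R - #|in_nbrs v|%:R)
    <= N * \sum_v `|#|out_nbrs v|%:R - #|in_nbrs v|%:R| :> R.
  rewrite mulr_sumr; apply: ler_sum => v _.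
  apply: le_trans (ler_norm _) _; rewrite normrM ger0_norm ?ler0n //.
  by apply: ler_wpM2r; rewrite ?normr_ge0 // ler_nat max_card.
apply: le_trans (sqr_sum_le _) _; rewrite -/N.
have := ler_wpM2l N_ge0 sum_sqr; have := ler_wpM2l N_ge0 potential_le; nra.
Qed.

End AcyclicDigraph.

Lemma cycle_step_nth (T : eqType) (e : rel T) (x : T) (p : seq T) (x0 : T) :
  path e x (rcons p x) -> forall i, (i < (size p).+1)%N ->
  e (nth x0 (x :: p) i) (nth x0 (x :: p) ((i + 1) %% (size p).+1)).
Proof.
move=> /(pathP x0) steps i i_lt; have := steps i; rewrite size_rcons => /(_ i_lt).
rewrite -rcons_cons nth_rcons /= i_lt nth_rcons.
case: (ltnP i (size p)) => i_size; first by rewrite modn_small ?addn1.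
have -> : i = size p by apply/eqP; rewrite eqn_leq i_size -ltnS i_lt.
by rewrite eqxx addn1 modnn.
Qed.

(* A set X of vertices orients each
   edge crossing the cut (X, ~X): red crossing edges leave X, blue crossing
   edges enter X.  A directed cycle of this digraph alternates between the two
   sides, hence between the two colours, so it is an alternating cycle. *)
Section CutDigraph.
Variables (n : nat) (red blue : rel 'I_n).
Hypothesis graph : two_coloured_graph red blue.

Lemma red_sym : symmetric red.
Proof. by case: graph. Qed.
Lemma blue_sym : symmetric blue.
Proof. by case: graph. Qed.
Lemma red_irrefl : irreflexive red.
Proof. by case: graph. Qed.
Lemma blue_irrefl : irreflexive blue.
Proof. by case: graph. Qed.

Lemma edge_irrefl v : edgeF red blue v v = false.
Proof. by rewrite /edgeF red_irrefl blue_irrefl. Qed.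
Lemma edge_sym : symmetric (edgeF red blue).
Proof. by move=> u v; rewrite /edgeF red_sym blue_sym. Qed.

Lemma sum_adjacency :
  (\sum_v \sum_w (edgeF red blue v w : nat) = 2 * num_edges red blue)%N.
Proof.
have split_pair v w : (edgeF red blue v w : nat) =
    (((v < w)%N && edgeF red blue v w) + ((w < v)%N && edgeF red blue v w))%N.
  case: (ltngtP v w) => [||/val_inj ->] //=; first by rewrite addn0.
  by rewrite edge_irrefl.
under eq_bigr => v _ do rewrite (eq_bigr _ (fun w _ => split_pair v w)) big_split /=.
rewrite big_split /= [X in (_ + X)%N]exchange_big /=.
under [X in (_ + X)%N]eq_bigr => v _ do under eq_bigr => w _ do rewrite edge_sym.
rewrite addnn -mul2n /num_edges -sum1_card pair_big /=; congr (2 * _)%N.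
by rewrite [RHS]big_mkcond; apply: eq_bigr => p _; rewrite inE; case: ifP.
Qed.

Definition crossing (X : {set 'I_n}) (u v : 'I_n) : bool := (u \in X) != (v \in X).

Definition cut_arc (X : {set 'I_n}) : rel 'I_n :=
  fun u v => crossing X u v && (if u \in X then red u v else blue u v).

Lemma cut_arc_irrefl X v : cut_arc X v v = false.
Proof. by rewrite /cut_arc /crossing eqxx. Qed.

Lemma cut_arc_asym X u v : cut_arc X u v -> cut_arc X v u -> False.
Proof.
rewrite /cut_arc /crossing red_sym blue_sym.
case: graph => _ _ _ _ /(_ v u).
by case: (u \in X); case: (v \in X); case: (red v u); case: (blue v u).
Qed.

Lemma cut_arc_edge X u v : cut_arc X u v -> edgeF red blue u v.
Proof. by rewrite /cut_arc /edgeF; case: (u \in X) => /andP[_ ->]; rewrite ?orbT. Qed.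

Lemma cut_arc_alternates X a b c :
  cut_arc X a b -> cut_arc X b c -> red a b <> red b c.
Proof.
rewrite /cut_arc /crossing; case: graph => _ _ _ _ excl.
move: (excl a b) (excl b c).
by case: (a \in X); case: (b \in X); case: (red a b); case: (blue a b);
  case: (red b c); case: (blue b c); rewrite //= andbF.
Qed.

Hypothesis no_alt_cycle : ~ has_alternating_cycle red blue.

Lemma cut_arc_acyclic X u v : cut_arc X u v -> ~~ connect (cut_arc X) v u.
Proof.
move=> arc_uv; apply/negP => /connectP[p path_p last_p].
move: arc_uv; rewrite {}last_p; case/shortenP: path_p => {}p path_p uniq_p _ arc_back.
apply: no_alt_cycle; exists (v :: p).
have closed : path (cut_arc X) v (rcons p v) by rewrite rcons_path path_p arc_back.
have step x0 := cycle_step_nth x0 closed.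
split => //=.
- case: p path_p uniq_p arc_back {closed step} => [|w [|w2 p]] //=.
    by rewrite cut_arc_irrefl.
  by rewrite andbT => arc_vw _ arc_wv; case: (cut_arc_asym arc_vw arc_wv).
- move=> x0 i i_lt; split; first exact: cut_arc_edge (step x0 i i_lt).
  apply: cut_arc_alternates (step x0 i i_lt) _.
  have next_lt : ((i + 1) %% (size p).+1 < (size p).+1)%N by rewrite ltn_mod.
  by have := step x0 _ next_lt; rewrite modnDml -addnA.
Qed.

End CutDigraph.

(* In the cut
   digraph of X, the imbalance out(v) - in(v) equals
   (sgn X v * colour_balance v - sum_w sgn X w * colour v w) / 2: its first
   part is controlled by the hypothesis on the degrees, its second part is a
   random signed sum, of size about sqrt n on average over X. *)
Section RandomCut.
Variables (n : nat) (red blue : rel 'I_n) (R : realFieldType).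
Hypothesis graph : two_coloured_graph red blue.
Local Open Scope ring_scope.

Definition colour (u v : 'I_n) : R := (red u v)%:R - (blue u v)%:R.
Definition colour_balance (v : 'I_n) : R := \sum_w colour v w.

Lemma colour_balanceE v :
  (degR red v)%:R - (degB blue v)%:R = colour_balance v.
Proof. by rewrite /degR /degB !card_set_natr -sumrB. Qed.

Lemma colour_sqr_le1 u v : colour u v ^+ 2 <= 1.
Proof. by rewrite /colour; case: (red u v); case: (blue u v) => /=; lra. Qed.

Lemma cut_arc_sub X v w :
  (cut_arc red blue X v w)%:R - (cut_arc red blue X w v)%:R =
  (sgn X v - sgn X w) / 2 * colour v w.
Proof.
rewrite /cut_arc /crossing /sgn /colour (red_sym graph w) (blue_sym graph w).
case: graph => _ _ _ _ /(_ v w).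
by case: (v \in X); case: (w \in X); case: (red v w); case: (blue v w) => //=; lra.
Qed.

Lemma cut_arc_add X v w :
  (cut_arc red blue X v w)%:R + (cut_arc red blue X w v)%:R =
  (1 - sgn X v * sgn X w) / 2 * (edgeF red blue v w)%:R :> R.
Proof.
rewrite /cut_arc /crossing /sgn /edgeF (red_sym graph w) (blue_sym graph w).
case: graph => _ _ _ _ /(_ v w).
by case: (v \in X); case: (w \in X); case: (red v w); case: (blue v w) => //=; lra.
Qed.

Definition cut_imbalance (X : {set 'I_n}) (v : 'I_n) : R :=
  #|out_nbrs (cut_arc red blue X) v|%:R - #|in_nbrs (cut_arc red blue X) v|%:R.

Lemma cut_imbalanceE X v :
  cut_imbalance X v =
  (sgn X v * colour_balance v - \sum_w sgn X w * colour v w) / 2.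
Proof.
rewrite /cut_imbalance /out_nbrs /in_nbrs !card_set_natr -sumrB.
rewrite /colour_balance mulr_sumr -sumrB mulr_suml; apply: eq_bigr => w _.
by rewrite cut_arc_sub; ring.
Qed.

(* A uniformly random cut contains each edge with probability 1/2. *)
Lemma sum_cut_arcs :
  \sum_X \sum_v #|out_nbrs (cut_arc red blue X) v|%:R =
  nsubsets 'I_n / 2 * (num_edges red blue)%:R :> R.
Proof.
have pair_avg v w : \sum_X ((cut_arc red blue X v w)%:R + (cut_arc red blue X w v)%:R) =
    nsubsets 'I_n / 2 * (edgeF red blue v w)%:R :> R.
  under eq_bigr => X _ do rewrite cut_arc_add.
  case: (eqVneq v w) => [<-|v_ne_w].
    by rewrite (edge_irrefl graph) mulr0 big1 // => X _; rewrite mulr0.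
  rewrite -mulr_suml -mulr_suml sumrB sum_sgn_mul (negbTE v_ne_w) subr0.
  by rewrite sumr_const /nsubsets -mulr_natl mulr1.
set F := fun v w => \sum_X (cut_arc red blue X v w)%:R : R.
have out_sum : \sum_X \sum_v #|out_nbrs (cut_arc red blue X) v|%:R = \sum_v \sum_w F v w.
  rewrite exchange_big; apply: eq_bigr => v _.
  by under eq_bigr => X _ do rewrite card_set_natr; exact: exchange_big.
have sym_sum : \sum_v \sum_w (F v w + F w v) = 2 * \sum_v \sum_w F v w.
  under eq_bigr => v _ do rewrite big_split /=.
  by rewrite big_split /= [X in _ + X]exchange_big /= -mulr2n mulr_natl.
have adjacency : \sum_v \sum_w (edgeF red blue v w)%:R = 2 * (num_edges red blue)%:R :> R.
  rewrite -natrM -(sum_adjacency graph) natr_sum.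
  by under eq_bigr => v _ do rewrite natr_sum.
have := sym_sum; under eq_bigr => v _ do under eq_bigr => w _ do
  rewrite /F -big_split /= pair_avg.
rewrite -out_sum; under eq_bigr => v _ do rewrite -mulr_sumr.
rewrite -mulr_sumr adjacency; lra.
Qed.

(* Averaged over all cuts, the total imbalance is at most M delta n^2, where
   M is the number of cuts: the degree hypothesis bounds the first part, and
   the l2-bound for random signs bounds the second by M n^(3/2) <= M delta n^2,
   which is where the assumption n >= delta^-2 is used. *)
Lemma sum_abs_cut_imbalance_le (delta : R) :
  0 < delta -> 1 <= delta ^+ 2 * n%:R ->
  \sum_v `|colour_balance v| <= delta * n%:R ^+ 2 ->
  \sum_X \sum_v `|cut_imbalance X v| <= nsubsets 'I_n * delta * n%:R ^+ 2.
Proof.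
move=> delta_gt0 delta_n balance_le.
set M : R := nsubsets 'I_n.
have M_ge0 : 0 <= M by rewrite ler0n.
set L := fun X v => \sum_w sgn X w * colour v w.
have imbalance_le X v : `|cut_imbalance X v| <= (`|colour_balance v| + `|L X v|) / 2.
  rewrite cut_imbalanceE normrM [`|2^-1|]ger0_norm ?invr_ge0 ?ler0n //.
  apply: ler_wpM2r; first by rewrite invr_ge0 ler0n.
  apply: le_trans (ler_normB _ _) _; rewrite normrM.
  by rewrite /sgn; case: (v \in X); rewrite ?normrN normr1 mul1r.
have random_part v : \sum_X `|L X v| <= M * (delta * n%:R).
  have colour_l2 : \sum_w colour v w ^+ 2 <= n%:R.
    have : \sum_w colour v w ^+ 2 <= \sum_(w : 'I_n) 1.
      by apply: ler_sum => w _; exact: colour_sqr_le1.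
    by rewrite sumr_const card_ord.
  have sqr_le : (\sum_X `|L X v|) ^+ 2 <= (M * (delta * n%:R)) ^+ 2.
    apply: le_trans (sum_abs_sgn_sqr_le _) _; rewrite -/M.
    have M2_ge0 : 0 <= M ^+ 2 by apply: sqr_ge0.
    have := ler_wpM2l M2_ge0 colour_l2; nra.
  move: sqr_le; rewrite ler_sqr // nnegrE.
    by apply: sumr_ge0 => X _; apply: normr_ge0.
  by rewrite !mulr_ge0 // ltW.
have split_sum : \sum_X \sum_v (`|colour_balance v| + `|L X v|) / 2 =
    (M * \sum_v `|colour_balance v| + \sum_v \sum_X `|L X v|) / 2.
  under eq_bigr => X _ do rewrite -mulr_suml big_split /=.
  by rewrite -mulr_suml big_split /= sumr_const [X in _ + X]exchange_big /M mulr_natl.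
have random_total : \sum_v \sum_X `|L X v| <= n%:R * (M * (delta * n%:R)).
  have : \sum_v \sum_X `|L X v| <= \sum_(v : 'I_n) M * (delta * n%:R).
    by apply: ler_sum => v _; exact: random_part.
  by rewrite sumr_const card_ord mulr_natl.
have : \sum_X \sum_v `|cut_imbalance X v| <=
       \sum_X \sum_v (`|colour_balance v| + `|L X v|) / 2.
  by apply: ler_sum => X _; apply: ler_sum => v _; exact: imbalance_le.
rewrite split_sum; have := ler_wpM2l M_ge0 balance_le; nra.
Qed.

End RandomCut.

Local Open Scope ring_scope.

(* Cauchy-Schwarz over the cuts, the acyclic-digraph bound for each cut, and
   the averaged imbalance bound combine to |E(F)|^2 <= 8 delta n^4. *)
Lemma num_edges_sqr_le (R : realFieldType) (n : nat) (red blue : rel 'I_n)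
    (delta : R) :
  two_coloured_graph red blue -> ~ has_alternating_cycle red blue ->
  0 < delta -> 1 <= delta ^+ 2 * n%:R ->
  \sum_v `|colour_balance red blue R v| <= delta * n%:R ^+ 2 ->
  (num_edges red blue)%:R ^+ 2 <= 8 * delta * n%:R ^+ 4.
Proof.
move=> graph no_alt delta_gt0 delta_n balance_le.
set M : R := nsubsets 'I_n; set E : R := (num_edges red blue)%:R.
set arcs := fun X => \sum_v #|out_nbrs (cut_arc red blue X) v|%:R : R.
have M_gt0 : 0 < M by rewrite ltr0n; apply/card_gt0P; exists set0.
have per_cut X : arcs X ^+ 2 <= 2 * n%:R ^+ 2 * \sum_v `|cut_imbalance red blue R X v|.
  have := acyclic_arcs_bound (@cut_arc_acyclic _ _ _ graph no_alt X) R.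
  by rewrite card_ord.
have all_cuts : \sum_X arcs X ^+ 2 <= 2 * n%:R ^+ 2 * (M * delta * n%:R ^+ 2).
  apply: le_trans (ler_sum _ (fun X _ => per_cut X)) _.
  rewrite -mulr_sumr ler_wpM2l ?mulr_ge0 ?exprn_ge0 ?ler0n //.
  exact: (sum_abs_cut_imbalance_le graph delta_gt0 delta_n balance_le).
have := sqr_sum_le arcs; rewrite (sum_cut_arcs R graph) -/M -/E.
have := ler_wpM2l (ltW M_gt0) all_cuts.
have -> : (M / 2 * E) ^+ 2 = M ^+ 2 / 4 * E ^+ 2 by field.
have -> : M * (2 * n%:R ^+ 2 * (M * delta * n%:R ^+ 2)) =
          M ^+ 2 / 4 * (8 * delta * n%:R ^+ 4) by field.
move=> bound cs; have := le_trans cs bound.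
by rewrite ler_pM2l // divr_gt0 ?exprn_gt0.
Qed.

Unset Implicit Arguments. Set Strict Implicit.

Theorem lemma2p3 (R : realType) :
  exists C : R, 0 < C /\
  forall (delta : R) (n : nat), 0 < delta -> delta ^-2 <= n%:R ->
  forall red blue : rel 'I_n,
    two_coloured_graph red blue ->
    ~ has_alternating_cycle red blue ->
    \sum_(i < n) `|(degR red i)%:R - (degB blue i)%:R| <= delta * n%:R ^+ 2 ->
    (num_edges red blue)%:R <= C * Num.sqrt delta * n%:R ^+ 2.
Proof.
exists 3; split; first lra.
move=> delta n delta_gt0 delta_n red blue graph no_alt balance_le.
have delta2_n : 1 <= delta ^+ 2 * n%:R.
  have := ler_wpM2l (ltW (exprn_gt0 2 delta_gt0)) delta_n.
  by rewrite mulfV ?gt_eqF ?exprn_gt0.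
have balance : \sum_v `|colour_balance red blue R v| <= delta * n%:R ^+ 2.
  by under eq_bigr => v _ do rewrite -colour_balanceE.
have edges_sqr := num_edges_sqr_le graph no_alt delta_gt0 delta2_n balance.
have sqrt_sqr : Num.sqrt delta ^+ 2 = delta by rewrite sqr_sqrtr ?ltW.
rewrite -ler_sqr ?nnegrE ?ler0n ?mulr_ge0 ?sqrtr_ge0 ?exprn_ge0 ?ler0n //.
apply: le_trans edges_sqr _.
rewrite !exprMn sqrt_sqr; have : 0 <= delta * n%:R ^+ 4.
  by rewrite mulr_ge0 ?exprn_ge0 ?ler0n ?ltW.
lra.
Qed.
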